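(* Let $X$ be a set with $|X|\ge3$. Then every grading of the symmetric inverse monoid $\mathcal I(X)$ by any group is trivial.
   Context: $\mathcal I(X)$ consists of all bijections $\phi:A\to B$ with $A,B\subseteq X$, composed as partial maps (the composite $\phi\psi$ is restricted to $\psi^{-1}(\mathrm{Im}\,\psi\cap\mathrm{Dom}\,\phi)$), with the empty map as zero. A $\Gamma$-grading of a semigroup $S$ with zero is a map $\deg:S\setminus\{0\}\to\Gamma$ with $\deg(st)=\deg(s)\deg(t)$ whenever $st\neq0$; it is trivial if every nonzero element has degree equal to the identity $\varepsilon$ of $\Gamma$. *)

Set Implicit Arguments.

(** Elements of the symmetric inverse monoid I(X): partial injections
    phi : A -> B (A, B subsets of X), encoded as maps X -> option X
    (None = undefined) that are injective on their domain.  The image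
    B is the set of values taken. *)
Record pinj (X : Type) := PInj {
  pmap :> X -> option X;
  pmap_inj : forall x y z, pmap x = Some z -> pmap y = Some z -> x = y
}.

Definition pcomp_fun (X : Type) (phi psi : pinj X) : X -> option X :=
  fun x => match psi x with Some y => phi y | None => None end.

Lemma pcomp_inj (X : Type) (phi psi : pinj X) :
  forall x y z, pcomp_fun phi psi x = Some z -> pcomp_fun phi psi y = Some z -> x = y.
Proof.
  unfold pcomp_fun; intros x y z Hx Hy.
  destruct (psi x) as [a|] eqn:Ea; [|discriminate].
  destruct (psi y) as [b|] eqn:Eb; [|discriminate].
  assert (a = b) by (exact (@pmap_inj _ phi a b z Hx Hy)). subst b.
  exact (@pmap_inj _ psi x y a Ea Eb).
Qed.

Definition pcomp (X : Type) (phi psi : pinj X) : pinj X :=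
  PInj (pcomp_fun phi psi) (pcomp_inj phi psi).

(** The zero of I(X) is the empty map; s is nonzero iff its domain is nonempty. *)
Definition pnonzero (X : Type) (s : pinj X) : Prop := exists x, s x <> None.

Definition is_group (G : Type) (mul : G -> G -> G) (one : G) (inv : G -> G) : Prop :=
  (forall a b c, mul a (mul b c) = mul (mul a b) c) /\
  (forall a, mul one a = a) /\ (forall a, mul a one = a) /\
  (forall a, mul (inv a) a = one) /\ (forall a, mul a (inv a) = one).

(** A G-grading of I(X): deg defined on nonzero elements (its value on the
    zero element is irrelevant), multiplicative whenever the product is nonzero. *)
Definition is_grading (X G : Type) (mul : G -> G -> G) (deg : pinj X -> G) : Prop :=
  forall s t : pinj X, pnonzero s -> pnonzero t -> pnonzero (pcomp s t) ->
    deg (pcomp s t) = mul (deg s) (deg t).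

From Stdlib Require Import Classical ClassicalEpsilon FunctionalExtensionality ProofIrrelevance.

(** Write [e_ab] for the partial injection [{a ↦ b}].  Since
    [s e_aa = e_ab] whenever [s a = b] and [e_aa] is idempotent, every
    nonzero [s] has the degree of some [e_ab], and [e_aa] has degree 1.
    A partial injection [{a ↦ b, c ↦ d}] shows [deg e_ab = deg e_cd]
    whenever [a <> c] and [b <> d]; for a third point [c] this gives
    [deg e_ac = deg e_ba = deg e_ab = deg e_bc], so [t := deg e_ab]
    satisfies [t = t t] by [e_bc e_ab = e_ac], whence [t = 1]. *)

Lemma group_idempotent_one {G : Type} {mul : G -> G -> G} {one : G} {inv : G -> G} :
  is_group mul one inv -> forall g, mul g g = g -> g = one.
Proof.
  intros [mulA [mul1g [_ [mulVg _]]]] g gg.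
  transitivity (mul (inv g) (mul g g)).
  - rewrite mulA, mulVg, mul1g; reflexivity.
  - rewrite gg; apply mulVg.
Qed.

Section PartialInjections.
Context {X : Type}.

Lemma pinj_ext (s t : pinj X) : (forall x, s x = t x) -> s = t.
Proof.
  destruct s as [f f_inj], t as [g g_inj]; simpl; intro fg.
  assert (f = g) as <- by (apply functional_extensionality; exact fg).
  f_equal; apply proof_irrelevance.
Qed.

Ltac case_points :=
  repeat (match goal with |- context [excluded_middle_informative ?P] =>
            destruct (excluded_middle_informative P) end;
          cbv beta iota; subst; try congruence).

Definition pinj_single_fun (a b x : X) : option X :=
  if excluded_middle_informative (x = a) then Some b else None.

Lemma pinj_single_inj (a b : X) x y z :
  pinj_single_fun a b x = Some z -> pinj_single_fun a b y = Some z -> x = y.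
Proof. unfold pinj_single_fun; case_points. Qed.

Definition pinj_single (a b : X) : pinj X := PInj (pinj_single_fun a b) (pinj_single_inj a b).

Definition pinj_pair_fun (a b c d x : X) : option X :=
  if excluded_middle_informative (x = a) then Some b
  else if excluded_middle_informative (x = c) then Some d else None.

Lemma pinj_pair_inj (a b c d : X) (ac : a <> c) (bd : b <> d) x y z :
  pinj_pair_fun a b c d x = Some z -> pinj_pair_fun a b c d y = Some z -> x = y.
Proof. unfold pinj_pair_fun; case_points. Qed.

Definition pinj_pair {a b c d : X} (ac : a <> c) (bd : b <> d) : pinj X :=
  PInj (pinj_pair_fun a b c d) (pinj_pair_inj a b c d ac bd).

Lemma pinj_pair_fst {a b c d : X} (ac : a <> c) (bd : b <> d) : pinj_pair ac bd a = Some b.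
Proof. cbv [pmap pinj_pair pinj_pair_fun]; case_points. Qed.

Lemma pinj_pair_snd {a b c d : X} (ac : a <> c) (bd : b <> d) : pinj_pair ac bd c = Some d.
Proof. cbv [pmap pinj_pair pinj_pair_fun]; case_points. Qed.

Lemma pinj_single_nonzero (a b : X) : pnonzero (pinj_single a b).
Proof. exists a; cbv [pmap pinj_single pinj_single_fun]; case_points. Qed.

Lemma pcomp_single (a b c : X) : pcomp (pinj_single b c) (pinj_single a b) = pinj_single a c.
Proof.
  apply pinj_ext; intro x.
  cbv [pmap pcomp pcomp_fun pinj_single pinj_single_fun]; case_points.
Qed.

Lemma pcomp_restrict_single {s : pinj X} {a b : X} :
  s a = Some b -> pcomp s (pinj_single a a) = pinj_single a b.
Proof.
  intro sa; apply pinj_ext; intro x.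
  cbv [pcomp pcomp_fun]; cbn [pmap pinj_single]; unfold pinj_single_fun; case_points.
Qed.

End PartialInjections.

Section Grading.
Context {X G : Type} {mul : G -> G -> G} {one : G} {inv : G -> G}.
Hypothesis HG : is_group mul one inv.
Context {deg : pinj X -> G}.
Hypothesis Hdeg : is_grading mul deg.

Lemma deg_pcomp_single (a b c : X) :
  deg (pinj_single a c) = mul (deg (pinj_single b c)) (deg (pinj_single a b)).
Proof.
  rewrite <- (pcomp_single a b c) at 1.
  apply Hdeg; rewrite ?pcomp_single; apply pinj_single_nonzero.
Qed.

Lemma deg_single_diag (a : X) : deg (pinj_single a a) = one.
Proof.
  apply (group_idempotent_one HG).
  symmetry; apply deg_pcomp_single.
Qed.

Lemma deg_of_apply {s : pinj X} {a b : X} : s a = Some b -> deg s = deg (pinj_single a b).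
Proof.
  intro sa.
  destruct HG as [_ [_ [mulg1 _]]].
  assert (s_nonzero : pnonzero s) by (exists a; rewrite sa; discriminate).
  rewrite <- (pcomp_restrict_single sa), Hdeg, deg_single_diag, mulg1;
    rewrite ?(pcomp_restrict_single sa); auto using pinj_single_nonzero.
Qed.

Lemma deg_single_eq {a b c d : X} :
  a <> c -> b <> d -> deg (pinj_single a b) = deg (pinj_single c d).
Proof.
  intros ac bd.
  rewrite <- (deg_of_apply (pinj_pair_fst ac bd)), (deg_of_apply (pinj_pair_snd ac bd)).
  reflexivity.
Qed.

Lemma deg_single_one {a b c : X} :
  a <> b -> a <> c -> b <> c -> deg (pinj_single a b) = one.
Proof.
  intros ab ac bc.
  apply (group_idempotent_one HG).
  assert (ba : b <> a) by congruence.
  assert (ca : c <> a) by congruence.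
  rewrite (deg_single_eq ab bc) at 1.
  rewrite <- deg_pcomp_single.
  rewrite (deg_single_eq ab ca), (deg_single_eq ba ab); reflexivity.
Qed.

End Grading.

Lemma exists_third_point {X : Type} {x1 x2 x3 : X} :
  x1 <> x2 -> x1 <> x3 -> x2 <> x3 -> forall y z : X, exists c, y <> c /\ z <> c.
Proof.
  intros n12 n13 n23 y z.
  destruct (classic (y <> x1 /\ z <> x1)) as [? | n1]; [exists x1; assumption |].
  destruct (classic (y <> x2 /\ z <> x2)) as [? | n2]; [exists x2; assumption |].
  exists x3.
  apply not_and_or in n1, n2.
  destruct n1 as [n1 | n1], n2 as [n2 | n2]; apply NNPP in n1, n2; subst; split; congruence.
Qed.

Theorem proposition5p1 (X : Type) (x1 x2 x3 : X)
  (H12 : x1 <> x2) (H13 : x1 <> x3) (H23 : x2 <> x3)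
  (G : Type) (mul : G -> G -> G) (one : G) (inv : G -> G)
  (HG : is_group mul one inv)
  (deg : pinj X -> G) (Hdeg : is_grading mul deg) :
  forall s : pinj X, pnonzero s -> deg s = one.
Proof.
  intros s [x sx].
  destruct (s x) as [y |] eqn:sxy; [| congruence].
  rewrite (deg_of_apply HG Hdeg sxy).
  destruct (excluded_middle_informative (x = y)) as [<- | xy].
  - exact (deg_single_diag HG Hdeg x).
  - destruct (exists_third_point H12 H13 H23 x y) as [c [xc yc]].
    exact (deg_single_one HG Hdeg xy xc yc).
Qed.
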